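(* Let $G=(V,E)$ be an undirected, unweighted graph with $n=|V|$ vertices. Let $\varepsilon\in(0,\frac{1}{18}]$ and suppose that $H$ is a $(1\pm\varepsilon)$-spectral sparsifier of $G$. Then $\widehat{H}$, the unweighted version of $H$, is an $\widetilde{O}(n^{2/3})$-spanner of $G$.
   Context: A $(1\pm\varepsilon)$-spectral sparsifier of $G$ is a weighted graph $H=(V,E_H,w)$ with $E_H\subseteq E$ and positive edge weights such that $(1-\varepsilon)L_H\preceq L_G\preceq(1+\varepsilon)L_H$, where $L_G=B_G^\top B_G$ is the Laplacian of $G$ ($B_G$ the edge–vertex incidence matrix), $L_H=B_H^\top W B_H$ with $W$ the diagonal matrix of edge weights, and $A\preceq B$ means $x^\top Ax\le x^\top Bx$ for all $x\in\mathbb{R}^n$. The unweighted version $\widehat{H}$ of $H$ is the graph $(V,E_H)$ with all edge weights set to $1$. A subgraph $K$ of $G$ is a $t$-spanner of $G$ if $d_K(u,v)\le t\cdot d_G(u,v)$ for all $u,v\in V$, where $d$ denotes shortest-path distance. $\widetilde{O}(f)$ means $f\cdot\mathrm{polylog}(n)$. *)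

From HB Require Import structures.
From mathcomp Require Import all_boot all_order all_algebra.
From mathcomp Require Import reals exp.
Set Implicit Arguments. Unset Strict Implicit. Unset Printing Implicit Defensive.
Import Order.TTheory GRing.Theory Num.Theory.
Local Open Scope ring_scope.

Section Defs.
Variable n : nat.

Definition simple_graph (e : rel 'I_n) : Prop :=
  symmetric e /\ irreflexive e.

(* Weighted Laplacian L = B^T W B, written entrywise: weighted degree on the
   diagonal, minus the edge weight off the diagonal. *)
Definition laplacian (R : numFieldType) (e : rel 'I_n) (w : 'I_n -> 'I_n -> R)
  : 'M[R]_n :=
  \matrix_(i, j) (if i == j then \sum_(k | e i k) w i k
                  else if e i j then - w i j else 0).

Definition ulaplacian (R : numFieldType) (e : rel 'I_n) : 'M[R]_n :=
  laplacian e (fun _ _ => 1).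

Definition loewner_le (R : numFieldType) (A B : 'M[R]_n) : Prop :=
  forall x : 'cV[R]_n, (x^T *m A *m x) 0 0 <= (x^T *m B *m x) 0 0.

Definition spectral_sparsifier (R : numFieldType) (eps : R) (e h : rel 'I_n)
  (w : 'I_n -> 'I_n -> R) : Prop :=
  [/\ symmetric h /\ subrel h e,
      (forall u v, w u v = w v u),
      (forall u v, h u v -> 0 < w u v),
      loewner_le ((1 - eps) *: laplacian h w) (ulaplacian R e)
    & loewner_le (ulaplacian R e) ((1 + eps) *: laplacian h w)].

Definition walk (e : rel 'I_n) (u v : 'I_n) (l : nat) : Prop :=
  exists s : seq 'I_n, [/\ size s = l, path e u s & last u s = v].

Definition is_dist (e : rel 'I_n) (u v : 'I_n) (d : nat) : Prop :=
  walk e u v d /\ forall l, walk e u v l -> (d <= l)%N.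

(* K is a t-spanner of G: d_K(u,v) <= t * d_G(u,v) for all u, v
   (vacuous when d_G(u,v) = +oo). *)
Definition is_spanner (R : numDomainType) (g k : rel 'I_n) (t : R) : Prop :=
  forall u v dG, is_dist g u v dG ->
    exists dK, is_dist k u v dK /\ (dK%:R <= t * dG%:R).

End Defs.

From HB Require Import structures.
From mathcomp Require Import all_boot all_order all_algebra.
From mathcomp Require Import reals exp.
From mathcomp Require Import ring lra zify.
Set Implicit Arguments. Unset Strict Implicit. Unset Printing Implicit Defensive.
Import Order.TTheory GRing.Theory Num.Theory.

(* Fix an edge uv of G and suppose d_H(u, v) >= T, where T ~ 40 n^(2/3).  Layer the
   vertices by their H-distance from u, truncated at T, so that H-edges join equal or
   adjacent layers.  Call a layer thin if it has at most sigma = 8n/T vertices, and mark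
   the thin even layers strictly between 0 and T.  The potential x rising by one on
   entering and on leaving each marked layer moves by at most one along H-edges and is a
   nonnegative combination of nested layer cuts; applying the lower sparsifier inequality
   to each cut and the upper one to x gives
     (1 - eps) sum_G |dx|^2 <= (1 + eps) sum_G |dx|.
   Only pairs with |dx| = 1 weigh against the left side, and each of them has an endpoint
   in a thin marked layer, so there are at most 4 sigma n of them; meanwhile |dx| across uv
   is twice the number of marked layers, which is at least T/4 because fewer than T/8
   layers are thick.  For eps <= 1/18 this forces T^3 <= 16 n^2, a contradiction.  Hence
   every edge of G is stretched by less than T in the unweighted H. *)

Section Walks.
Variables (n : nat) (e : rel 'I_n).

Definition walkb (u v : 'I_n) (l : nat) : bool :=
  [exists s : l.-tuple 'I_n, path e u s && (last u s == v)].

Lemma walkP u v l : reflect (walk e u v l) (walkb u v l).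
Proof.
apply: (iffP existsP) => [[s /andP[es /eqP ls]] | [s [sz es ls]]].
  by exists s; rewrite size_tuple.
by subst l; exists (in_tuple s); rewrite es ls eqxx.
Qed.

Lemma walk0 u : walk e u u 0.
Proof. by exists [::]. Qed.

Lemma walk1 u v : e u v -> walk e u v 1.
Proof. by move=> euv; exists [:: v]; rewrite /= euv. Qed.

Lemma walk_cat u v z l1 l2 : walk e u v l1 -> walk e v z l2 -> walk e u z (l1 + l2).
Proof.
move=> [s1 [<- es1 ls1]] [s2 [<- es2 ls2]]; exists (s1 ++ s2).
by rewrite size_cat cat_path last_cat ls1 es1 es2 ls2.
Qed.

Lemma walk_dist u v l : walk e u v l -> exists2 d, is_dist e u v d & d <= l.
Proof.
move=> /walkP euv; have ex : exists l, walkb u v l by exists l.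
case: (ex_minnP ex) => d /walkP ed dmin; exists d; last exact: dmin.
by split=> // l' /walkP; apply: dmin.
Qed.

End Walks.

Lemma walk_stretch n (e h : rel 'I_n) K u v d :
  (forall x y, e x y -> exists2 l, l <= K & walk h x y l) ->
  walk e u v d -> exists2 l, l <= d * K & walk h u v l.
Proof.
move=> stretch [s [<- es <-]] {v}.
elim: s u es => [|y s IH] u /=; first by exists 0 => //; apply: walk0.
case/andP=> euy /IH[l lK ys]; have [l' l'K uy] := stretch u y euy.
by exists (l' + l); [rewrite mulSn leq_add | apply: walk_cat uy ys].
Qed.

Section BfsLevel.
Variables (n : nat) (h : rel 'I_n) (u : 'I_n) (T : nat).

Definition reach (a : nat) (z : 'I_n) : bool := [exists l : 'I_a.+1, walkb h u z l].

(* [bfs_level z = min(T, d_h(u, z))]: it counts the radii below [T] whose ball misses [z]. *)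
Definition bfs_level (z : 'I_n) : nat := \sum_(a < T) ~~ reach a z.

Lemma reach_src a : reach a u.
Proof. by apply/existsP; exists ord0; apply/walkP/walk0. Qed.

Lemma reach_edge a p q : reach a p -> h p q -> reach a.+1 q.
Proof.
move=> /existsP[l /walkP up] hpq; apply/existsP; exists (inord l.+1).
rewrite inordK; last exact: ltn_ord l.
by rewrite -addn1; apply/walkP/(walk_cat up)/walk1.
Qed.

Lemma bfs_level_src : bfs_level u = 0.
Proof. by apply: big1 => a _; rewrite reach_src. Qed.

Lemma bfs_level_le z : bfs_level z <= T.
Proof.
rewrite -[X in _ <= X]card_ord -sum1_card.
by apply: leq_sum => a _; apply: leq_b1.
Qed.

Lemma bfs_level_edge p q : h p q -> bfs_level q <= (bfs_level p).+1.
Proof.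
move=> hpq; rewrite /bfs_level; case: T => [|T']; first by rewrite big_ord0.
rewrite big_ord_recl [X in _ <= X.+1]big_ord_recr /= -add1n.
apply: leq_add; first exact: leq_b1.
apply: leq_trans (leq_addr _ _); apply: leq_sum => a _.
case rpa: (reach a p); last exact: leq_b1.
by rewrite /bump add1n (reach_edge rpa hpq).
Qed.

Lemma bfs_level_far v : ~~ [exists l : 'I_T, walkb h u v l] -> bfs_level v = T.
Proof.
move=> far; rewrite -[RHS]card_ord -sum1_card; apply: eq_bigr => a _.
apply/eqP; rewrite eqb1; apply: contra far => /existsP[l uv].
by apply/existsP; exists (widen_ord (ltn_ord a) l).
Qed.

End BfsLevel.

Lemma sum_card_fibers (I : finType) (f : I -> nat) m :
  \sum_(t < m) #|[set z | f z == t]| <= #|I|.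
Proof.
under eq_bigr do rewrite -sum1dep_card big_mkcond.
rewrite exchange_big -sum1_card; apply: leq_sum => z _; rewrite -big_mkcond sum1dep_card.
apply/card_le1_eqP => s t; rewrite !inE => /eqP fs /eqP ft.
by apply: ord_inj; rewrite -fs -ft.
Qed.

Lemma count_even_pos T : T <= (\sum_(t < T) (~~ odd t && (0 < t))).*2 + 2.
Proof.
suff : T + odd T <= (\sum_(t < T) (~~ odd t && (0 < t))).*2 + 2 by lia.
elim: T => [|T IH] //; rewrite big_ord_recr /= doubleD.
case: T IH => [|T] IH /=; first by rewrite big_ord0.
by move: IH; rewrite /= negbK; case: (odd T) => /=; lia.
Qed.

Lemma odd_dist1 (a b : nat) : `|a - b| = 1 -> odd a = ~~ odd b.
Proof.
move=> d1; have [->|->] : a = b.+1 \/ b = a.+1 by lia.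
- by [].
- by rewrite /= negbK.
Qed.

Definition psum (d : nat -> nat) (l : nat) : nat := \sum_(a < l) d a.

Lemma psum_widen d l B : l <= B -> psum d l = \sum_(a < B) d a * (a < l).
Proof.
move=> lB; rewrite /psum (big_ord_widen _ _ lB) big_mkcond /=.
by apply: eq_bigr => a _; case: (a < l); rewrite ?muln1 ?muln0.
Qed.

Section MarkedLevels.
Variables (n : nat) (lvl : 'I_n -> nat) (T sig : nat).

Definition thick (t : nat) : bool := sig < #|[set z | lvl z == t]|.

(* Marked levels are never adjacent, so [pot] moves by at most one between adjacent levels;
   it rises on entering and on leaving each marked level, hence is odd exactly there. *)
Definition marked (t : nat) : bool := [&& ~~ odd t, 0 < t, t < T & ~~ thick t].

Definition nmarked (l : nat) : nat := \sum_(t < l) marked t.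

Definition pot : nat -> nat := psum (fun a => marked a + marked a.+1).

Lemma marked_succ t : marked t + marked t.+1 <= 1.
Proof. by rewrite /marked /= negbK; case: (odd t); rewrite /= ?andbF ?addn0 leq_b1. Qed.

Lemma pot_succ l : pot l.+1 = pot l + (marked l + marked l.+1).
Proof. exact: big_ord_recr. Qed.

Lemma nmarked_le l1 l2 : l1 <= l2 -> nmarked l1 <= nmarked l2.
Proof.
move=> le; rewrite /nmarked (big_ord_widen _ (fun t => nat_of_bool (marked t)) le).
by rewrite [X in _ <= X](bigID (fun t : 'I_l2 => t < l1)) leq_addr.
Qed.

Lemma potE l : pot l = (nmarked l).*2 + marked l.
Proof.
elim: l => [|l IH]; first by rewrite /pot /psum /nmarked !big_ord0.
by rewrite pot_succ IH /nmarked big_ord_recr doubleD /=; lia.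
Qed.

Lemma pot_odd l : odd (pot l) = marked l.
Proof. by rewrite potE oddD odd_double; case: (marked l). Qed.

Lemma pot_marked_lt t1 t2 : marked t1 -> marked t2 -> t1 < t2 -> (pot t1).+1 < pot t2.
Proof.
move=> m1 m2 lt; rewrite !potE m1 m2.
have := nmarked_le lt; rewrite /nmarked big_ord_recr /= -/(nmarked t1) m1; lia.
Qed.

Lemma pot_marked_inj t1 t2 : marked t1 -> marked t2 -> pot t1 = pot t2 -> t1 = t2.
Proof.
move=> m1 m2 eq12; case: (ltngtP t1 t2) => // lt.
- by have := pot_marked_lt m1 m2 lt; rewrite eq12; lia.
- by have := pot_marked_lt m2 m1 lt; rewrite eq12; lia.
Qed.

Lemma dist_pot_le1 (l1 l2 : nat) : `|l1 - l2| <= 1 -> `|pot l1 - pot l2| <= 1.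
Proof.
have step l : pot l <= pot l.+1 <= (pot l).+1.
  by rewrite pot_succ; have := marked_succ l; lia.
move=> le1; have [->|[->|->]] : l2 = l1 \/ l2 = l1.+1 \/ l1 = l2.+1 by lia.
- by rewrite distnn.
- by have := step l1; lia.
- by have := step l2; lia.
Qed.

Lemma card_marked_pot c : #|[set z | marked (lvl z) & pot (lvl z) == c]| <= sig.
Proof.
case: (set_0Vmem [set z | marked (lvl z) & pot (lvl z) == c]) => [->|[z0]].
  by rewrite cards0.
rewrite inE => /andP[m0 /eqP p0].
apply: leq_trans (_ : #|[set z | lvl z == lvl z0]| <= sig); last first.
  by move: m0 => /and4P[_ _ _]; rewrite /thick -leqNgt.
apply/subset_leq_card/subsetP => z; rewrite !inE => /andP[mz /eqP pz].
by apply/eqP/pot_marked_inj => //; rewrite pz p0.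
Qed.

Lemma card_marked_pot_dist1 (c : nat) :
  #|[set z | marked (lvl z) & `|c - pot (lvl z)| == 1]| <= sig.*2.
Proof.
set S := fun c' => [set z | marked (lvl z) & pot (lvl z) == c'].
apply: leq_trans (_ : #|S c.+1 :|: S c.-1| <= _).
  apply/subset_leq_card/subsetP => z; rewrite !inE => /andP[-> /eqP d1] /=.
  by apply/orP; lia.
rewrite cardsU -addnn.
exact: leq_trans (leq_subr _ _) (leq_add (card_marked_pot _) (card_marked_pot _)).
Qed.

Lemma sum_pot_dist1 :
  \sum_p \sum_q (`|pot (lvl p) - pot (lvl q)| == 1) <= 4 * sig * n.
Proof.
pose Q p q := marked (lvl q) && (`|pot (lvl p) - pot (lvl q)| == 1).
have sumQ p : \sum_q Q p q <= sig.*2.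
  by rewrite -[X in X <= _]/(\sum_q (if Q p q then 1 else 0)) -big_mkcond
    sum1dep_card card_marked_pot_dist1.
apply: leq_trans (_ : \sum_p \sum_q (Q p q + Q q p) <= _).
  apply: leq_sum => p _; apply: leq_sum => q _; case: eqP => // d1.
  have d1' : `|pot (lvl q) - pot (lvl p)| = 1 by rewrite distnC.
  have := odd_dist1 d1; rewrite !pot_odd /Q d1 d1' eqxx !andbT => ->.
  by case: (marked (lvl q)).
under eq_bigr do rewrite big_split /=.
rewrite big_split /= [X in _ + X]exchange_big addnn.
apply: leq_trans (_ : (n * sig.*2).*2 <= _); last by rewrite -!muln2; lia.
rewrite leq_double -[n in n * _]card_ord -sum_nat_const.
by apply: leq_sum => p _.
Qed.

Lemma sum_thick_le : (\sum_(t < T) thick t) * sig.+1 <= n.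
Proof.
apply: leq_trans (_ : \sum_(t < T) #|[set z | lvl z == t]| <= _); last first.
  by rewrite -[X in _ <= X]card_ord; apply: sum_card_fibers.
rewrite big_distrl /=; apply: leq_sum => t _; rewrite /thick.
by case: ltnP => h; rewrite ?mul1n ?mul0n.
Qed.

Lemma count_marked : T <= (nmarked T + \sum_(t < T) thick t).*2 + 2.
Proof.
apply: leq_trans (count_even_pos T) _; rewrite leq_add2r leq_double /nmarked -big_split.
apply: leq_sum => t _; rewrite /marked ltn_ord /=.
by case: (~~ odd t) (0 < t) (thick t) => [] [] [].
Qed.

End MarkedLevels.

Lemma thick_levels_few n T th : 0 < n -> 0 < T -> th * (8 * n %/ T).+1 <= n -> 8 * th <= T.
Proof.
move=> n0 T0 hth.
have h1 : th * (8 * n) <= th * ((8 * n %/ T).+1 * T).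
  exact: leq_mul (leqnn th) (ltnW (ltn_ceil _ T0)).
have h2 : th * (8 * n %/ T).+1 * T <= n * T := leq_mul hth (leqnn T).
rewrite -(leq_pmul2r n0); move: h1 h2; set s := (8 * n %/ T).+1; lia.
Qed.

Lemma stretch_absurd n T sig P : 40 <= T -> 16 * n ^ 2 < T ^ 3 -> sig * T <= 8 * n ->
  T + 16 <= 4 * P -> 17 * (P.*2) ^ 2 <= 19 * P.*2 + 8 * sig * n -> False.
Proof.
move=> T40 Tbig sigT TP; rewrite -muln2 expnMn => key.
have P10 : 10 * P <= P * P by apply: leq_mul => //; lia.
have h1 : 8 * (P * P) <= sig * n by lia.
have h2 : 8 * (P * P) * T <= 8 * n * n.
  apply: leq_trans (leq_mul h1 (leqnn T)) _; rewrite mulnAC.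
  exact: leq_mul sigT (leqnn n).
have h3 : T * T * T <= 4 * P * (4 * P) * T by apply: leq_mul => //; apply: leq_mul; lia.
lia.
Qed.

Local Open Scope ring_scope.

Section Energy.
Variables (R : realFieldType) (n : nat).

Definition energy (r : rel 'I_n) (w : 'I_n -> 'I_n -> R) (x : 'I_n -> R) : R :=
  \sum_i \sum_(j | r i j) w i j * (x i - x j) ^+ 2.

Lemma quad_formE (A : 'M[R]_n) (x : 'I_n -> R) :
  ((\col_i x i)^T *m A *m \col_i x i) 0 0 = \sum_i \sum_j x i * A i j * x j.
Proof.
rewrite !mxE; under eq_bigr do rewrite !mxE big_distrl /=.
rewrite exchange_big; apply: eq_bigr => i _; apply: eq_bigr => j _.
by rewrite !mxE.
Qed.

Lemma laplacian_form (r : rel 'I_n) (w : 'I_n -> 'I_n -> R) (x : 'I_n -> R) :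
  symmetric r -> irreflexive r -> (forall i j, w i j = w j i) ->
  ((\col_i x i)^T *m laplacian r w *m \col_i x i) 0 0 *+ 2 = energy r w x.
Proof.
move=> rsym rirr wsym.
pose E (i j : 'I_n) := w i j * (x i ^+ 2 - x i * x j).
have rowE i : \sum_j x i * laplacian r w i j * x j = \sum_(j | r i j) E i j.
  transitivity (\sum_j ((if j == i then x i * (\sum_(k | r i k) w i k) * x i else 0)
                       - (if r i j then w i j * (x i * x j) else 0))).
    apply: eq_bigr => j _; rewrite mxE eq_sym; case: eqP => [->|_].
      by rewrite rirr subr0.
    by case: (r i j); ring.
  rewrite sumrB -!big_mkcond big_pred1_eq mulrAC -expr2 mulrC mulr_suml -sumrB.
  by apply: eq_bigr => j _; rewrite /E; ring.
have swapE : \sum_i \sum_(j | r i j) E j i = \sum_i \sum_(j | r i j) E i j.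
  rewrite (exchange_big_dep xpredT) //=; apply: eq_bigr => i _.
  by apply: eq_bigl => j; rewrite rsym.
rewrite quad_formE; under eq_bigr do rewrite rowE.
rewrite mulr2n -[X in _ + X = _]swapE -big_split /=; apply: eq_bigr => i _.
by rewrite -big_split /=; apply: eq_bigr => j _; rewrite /E wsym; ring.
Qed.

End Energy.

Lemma natr_distn (R : numDomainType) (a b : nat) : (`|a - b|%N)%:R = `|a%:R - b%:R : R|.
Proof. by rewrite natr_absz intr_norm rmorphB. Qed.

Lemma sparsifier_energy (R : realFieldType) n (e h : rel 'I_n) (w : 'I_n -> 'I_n -> R) eps :
  simple_graph e -> spectral_sparsifier eps e h w ->
  (forall x, (1 - eps) * energy h w x <= energy e (fun _ _ => 1) x) /\
  (forall x, energy e (fun _ _ => 1) x <= (1 + eps) * energy h w x).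
Proof.
move=> [esym eirr] [[hsym hsub] wsym _ lo up].
have hirr : irreflexive h by move=> z; apply/negbTE/negP => /hsub; rewrite eirr.
have formE c r (w' : 'I_n -> 'I_n -> R) x :
    symmetric r -> irreflexive r -> (forall i j, w' i j = w' j i) ->
    ((\col_i x i)^T *m (c *: laplacian r w') *m \col_i x i) 0 0 *+ 2 = c * energy r w' x.
  by move=> rsym rirr w'sym; rewrite -scalemxAr -scalemxAl mxE -mulrnAr laplacian_form.
have eformE x : ((\col_i x i)^T *m ulaplacian R e *m \col_i x i) 0 0 *+ 2
    = energy e (fun _ _ => 1) x.
  by rewrite -[ulaplacian R e]scale1r formE // mul1r.
split=> x.
- by have := lo (\col_i x i); rewrite -(ler_pMn2r (isT : (0 < 2)%N)) formE // eformE.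
- by have := up (\col_i x i); rewrite -(ler_pMn2r (isT : (0 < 2)%N)) formE // eformE.
Qed.

(* Coarea: the potential [psum d \o lvl] is the combination of the nested level cuts
   [cut a] with weights [d a], so its increment is the weighted number of cuts crossed. *)
Section Coarea.
Variables (R : realFieldType) (n : nat) (d : nat -> nat) (lvl : 'I_n -> nat) (B : nat).
Hypothesis lvl_le : forall z, (lvl z <= B)%N.

Let gap p q := `|psum d (lvl p) - psum d (lvl q)|%N.
Let cut a z : R := (a < lvl z)%N%:R.

Lemma gap_cuts p q : gap p q = (\sum_(a < B) d a * ((a < lvl p) != (a < lvl q)))%N.
Proof.
wlog le_pq : p q / (lvl p <= lvl q)%N => [W|].
  case: (leqP (lvl p) (lvl q)) => [|/ltnW] /W //; rewrite /gap distnC => ->.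
  by apply: eq_bigr => a _; rewrite eq_sym.
have mono a : ((a < lvl p) <= (a < lvl q))%N.
  by case: (ltnP a (lvl p)) => //= ap; rewrite (leq_trans ap le_pq).
rewrite /gap !(psum_widen d (lvl_le _)) distnEr; last first.
  by apply: leq_sum => a _; rewrite leq_mul2l mono orbT.
rewrite -sumnB => [|a _]; last by rewrite leq_mul2l mono orbT.
apply: eq_bigr => a _; rewrite -mulnBr; congr (_ * _)%N.
by move: (mono a); case: (a < lvl p)%N; case: (a < lvl q)%N.
Qed.

Lemma energy_cuts (r : rel 'I_n) (w : 'I_n -> 'I_n -> R) :
  \sum_(a < B) (d a)%:R * energy r w (cut a) = \sum_p \sum_(q | r p q) w p q * (gap p q)%:R.
Proof.
have cutE a p q : (cut a p - cut a q) ^+ 2 = ((a < lvl p)%N != (a < lvl q)%N)%:R.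
  rewrite /cut; case: (a < lvl p)%N; case: (a < lvl q)%N;
  by rewrite ?subrr ?expr0n ?subr0 ?sub0r ?sqrrN ?expr1n.
under eq_bigr do rewrite /energy mulr_sumr.
rewrite exchange_big; apply: eq_bigr => p _.
under eq_bigr do rewrite mulr_sumr.
rewrite exchange_big; apply: eq_bigr => q _.
rewrite gap_cuts natr_sum mulr_sumr; apply: eq_bigr => a _.
by rewrite cutE natrM mulrCA.
Qed.

Lemma sparsifier_gap_bound (e h : rel 'I_n) (w : 'I_n -> 'I_n -> R) (eps : R) :
  0 <= eps <= 1 ->
  (forall x, (1 - eps) * energy h w x <= energy e (fun _ _ => 1) x) ->
  (forall x, energy e (fun _ _ => 1) x <= (1 + eps) * energy h w x) ->
  (forall p q, h p q -> gap p q <= 1)%N ->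
  (1 - eps) * \sum_p \sum_(q | e p q) (gap p q)%:R ^+ 2 <=
  (1 + eps) * \sum_p \sum_(q | e p q) (gap p q)%:R.
Proof.
move=> /andP[eps0 eps1] lo up gap_h.
pose x z : R := (psum d (lvl z))%:R.
have dxE p q : (x p - x q) ^+ 2 = (gap p q)%:R ^+ 2.
  by rewrite /gap natr_distn real_normK ?num_real.
have energy_e : energy e (fun _ _ => 1) x = \sum_p \sum_(q | e p q) (gap p q)%:R ^+ 2.
  by apply: eq_bigr => p _; apply: eq_bigr => q _; rewrite mul1r dxE.
have energy_h : energy h w x = \sum_(a < B) (d a)%:R * energy h w (cut a).
  rewrite energy_cuts; apply: eq_bigr => p _; apply: eq_bigr => q hpq; rewrite dxE.
  by rewrite -natrX; case: (gap p q) (gap_h p q hpq) => [|[|]].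
have cuts_e : \sum_(a < B) (d a)%:R * energy e (fun _ _ => 1) (cut a)
    = \sum_p \sum_(q | e p q) (gap p q)%:R.
  by rewrite energy_cuts; apply: eq_bigr => p _; apply: eq_bigr => q _; rewrite mul1r.
(* Upper sparsifier inequality on [x], lower one on each cut. *)
rewrite -energy_e -cuts_e.
apply: le_trans (_ : (1 - eps) * ((1 + eps) * energy h w x) <= _).
  by rewrite ler_wpM2l ?subr_ge0.
rewrite mulrCA ler_wpM2l ?addr_ge0 // energy_h mulr_sumr ler_sum // => a _.
by rewrite mulrCA ler_wpM2l.
Qed.

End Coarea.

Lemma excess_le (R : realFieldType) (I : finType) (P : pred I) (a : I -> nat) (eps : R) i0 :
  0 <= eps <= 1 / 18 -> P i0 ->
  (1 - eps) * \sum_(i | P i) (a i)%:R ^+ 2 <= (1 + eps) * \sum_(i | P i) (a i)%:R ->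
  (17 * a i0 ^ 2 <= 19 * a i0 + 2 * \sum_(i | P i) (a i == 1))%N.
Proof.
move=> /andP[eps0 eps18] Pi0 sumA.
(* On naturals, [(1 - eps) k^2 - (1 + eps) k] is negative only at [k = 1], where it is [-2 eps]. *)
pose psi k : R := (1 - eps) * k%:R ^+ 2 - (1 + eps) * k%:R + 2 * eps * (k == 1)%:R.
have psi_ge0 k : 0 <= psi k.
  rewrite /psi; case: k => [|[|k]].
  - by rewrite /= mulr0n expr0n /=; lra.
  - by rewrite /= mulr1n expr1n; lra.
  have k2 : (2 : R) <= k.+2%:R by rewrite ler_nat.
  rewrite /= mulr0 addr0; nra.
have : psi (a i0) <= 2 * eps * (\sum_(i | P i) (a i == 1))%:R.
  apply: le_trans (_ : \sum_(i | P i) psi (a i) <= _).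
    by rewrite (bigD1 i0) //= lerDl sumr_ge0.
  rewrite /psi big_split sumrB /= -!mulr_sumr natr_sum; lra.
rewrite /psi -(ler_nat R) natrD natrM natrX !natrM => psi_le.
have m0 : 0 <= (a i0)%:R :> R := ler0n _ _.
have M0 : 0 <= (\sum_(i | P i) (a i == 1))%:R :> R := ler0n _ _.
have b0 : 0 <= (a i0 == 1)%:R :> R := ler0n _ _.
have b1 : (a i0 == 1)%:R <= 1 :> R by rewrite lern1 leq_b1.
nra.
Qed.

Lemma sparsifier_short_walk (R : realFieldType) n (e h : rel 'I_n)
    (w : 'I_n -> 'I_n -> R) (eps : R) (T : nat) (u v : 'I_n) :
  simple_graph e -> 0 <= eps <= 1 / 18 -> spectral_sparsifier eps e h w ->
  (40 <= T)%N -> (16 * n ^ 2 < T ^ 3)%N -> e u v -> exists2 l, (l < T)%N & walk h u v l.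
Proof.
move=> eS eps_bd sp T40 Tbig euv.
have [/existsP[l /walkP uv] | far] := boolP [exists l : 'I_T, walkb h u v l].
  by exists l.
exfalso; have n0 : (0 < n)%N := leq_ltn_trans (leq0n u) (ltn_ord u).
have [lo up] := sparsifier_energy eS sp; have [[hsym _] _ _ _ _] := sp.
set lvl := bfs_level h u T; set sig := (8 * n %/ T)%N.
set gap := fun p q => `|pot lvl T sig (lvl p) - pot lvl T sig (lvl q)|%N.
have gap_h p q : h p q -> (gap p q <= 1)%N.
  move=> hpq; have hqp : h q p by rewrite hsym.
  apply: dist_pot_le1; have := bfs_level_edge u T hpq; have := bfs_level_edge u T hqp.
  rewrite -/lvl; lia.
have eps01 : 0 <= eps <= 1 by move: eps_bd => /andP[? ?]; apply/andP; split; lra.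
have := sparsifier_gap_bound (d := fun a => (marked lvl T sig a + marked lvl T sig a.+1)%N)
  (bfs_level_le h u T) eps01 lo up gap_h.
rewrite !pair_big_dep /= => key.
have excess : (17 * gap u v ^ 2 <=
               19 * gap u v + 2 * \sum_(pq | e pq.1 pq.2) (gap pq.1 pq.2 == 1))%N.
  exact: (excess_le (i0 := (u, v)) eps_bd euv key).
have gap_uv : gap u v = (nmarked lvl T sig T).*2.
  rewrite /gap /lvl bfs_level_src (bfs_level_far far) !potE /marked !ltnn !andbF.
  by rewrite /nmarked big_ord0 /= !addn0 dist0n.
have gap1 : (\sum_(pq | e pq.1 pq.2) (gap pq.1 pq.2 == 1) <= 4 * sig * n)%N.
  apply: leq_trans (sum_pot_dist1 lvl T sig); rewrite pair_bigA.
  by rewrite [X in (_ <= X)%N](bigID (fun pq => e pq.1 pq.2)) leq_addr.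
have T0 : (0 < T)%N by apply: leq_trans T40.
have few := thick_levels_few n0 T0 (sum_thick_le lvl T sig).
have count := count_marked lvl T sig.
rewrite gap_uv in excess.
apply: (stretch_absurd T40 Tbig (leq_divM _ _) (_ : (T + 16 <= 4 * nmarked lvl T sig T)%N)).
- by move: few count; lia.
- by move: excess gap1; lia.
Qed.

Lemma spanner_of_stretch (R : numDomainType) n (e h : rel 'I_n) K :
  (forall x y, e x y -> exists2 l, (l <= K)%N & walk h x y l) -> is_spanner e h (K%:R : R).
Proof.
move=> stretch u v d [/(walk_stretch stretch)[l lK uv] _].
have [dH dist_dH dHl] := walk_dist uv; exists dH; split=> //.
by rewrite -natrM ler_nat mulnC (leq_trans dHl).
Qed.

Lemma spanner_le (R : numDomainType) n (e h : rel 'I_n) (t t' : R) :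
  t <= t' -> is_spanner e h t -> is_spanner e h t'.
Proof.
move=> tt' span u v d /span[dK [dist_dK le_dK]]; exists dK; split=> //.
by rewrite (le_trans le_dK) // ler_wpM2r.
Qed.

Lemma pow23_cube (R : realType) (n : nat) : (n%:R `^ (2/3) : R) ^+ 3 = n%:R ^+ 2.
Proof.
rewrite -powR_mulrn ?powR_ge0 // -powRrM.
have -> : (2 / 3 * 3%:R : R) = 2%:R by field.
by rewrite powR_mulrn // ler0n.
Qed.

Lemma nat_above_pow23 (R : realType) (n : nat) : (0 < n)%N ->
  exists2 r : nat, (n ^ 2 < r ^ 3)%N & r%:R <= 2 * n%:R `^ (2 / 3) :> R.
Proof.
move=> n0; set y : R := n%:R `^ (2 / 3).
have y0 : 0 <= y by apply: powR_ge0.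
have y1 : 1 <= y.
  rewrite -(ler_pXn2r (isT : (0 < 3)%N)) ?nnegrE // expr1n pow23_cube.
  by rewrite exprn_ege1 // ler1n.
exists (Num.truncn y).+1.
  rewrite -(ltr_nat R) !natrX -pow23_cube -/y.
  by rewrite ltrXn2r // truncnS_gt.
rewrite -natr1; have := truncn_le y; rewrite y0; lra.
Qed.

Theorem theorem1p1 (R : realType) :
  exists (C : R) (k : nat), 0 < C /\
  forall (n : nat) (e h : rel 'I_n) (w : 'I_n -> 'I_n -> R) (eps : R),
    simple_graph e ->
    0 < eps -> eps <= 1 / 18 ->
    spectral_sparsifier eps e h w ->
    is_spanner e h (C * (n%:R `^ (2 / 3)) * (ln (n.+1)%:R) ^+ k).
Proof.
exists 80, 0%N; split=> [|n e h w eps eS eps0 eps18 sp]; first lra.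
have [n0|n0] := posnP n; first by subst n => - [].
have [r nr r_le] := nat_above_pow23 R n0.
have eps_bd : 0 <= eps <= 1 / 18 by apply/andP; split; lra.
have r0 : (0 < r)%N.
  by apply: contraTT nr; rewrite -eqn0Ngt => /eqP ->; rewrite exp0n.
have T40 : (40 <= 40 * r)%N by rewrite leq_pmulr.
have Tbig : (16 * n ^ 2 < (40 * r) ^ 3)%N by rewrite expnMn; lia.
have stretch x y : e x y -> exists2 l, (l <= 40 * r)%N & walk h x y l.
  move=> exy; have [l lT xy] := sparsifier_short_walk eS eps_bd sp T40 Tbig exy.
  by exists l => //; apply: ltnW.
have le_t : (40 * r)%N%:R <= 80 * n%:R `^ (2 / 3) * (ln n.+1%:R) ^+ 0 :> R.
  by rewrite expr0 mulr1 natrM; lra.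
exact: spanner_le le_t (spanner_of_stretch R stretch).
Qed.
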